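(* Consider the one-dimensional Approximate Hierarchical Heavy Hitters problem over a rooted tree $T$ all of whose leaves have depth $h$, so the lattice has $H=h+1$ nodes (depths $0,\dots,h$). Let $\phi\in(0,1]$ and let $\epsilon>0$ be such that $1/\epsilon$ is a positive integer. Run the one-dimensional algorithm described in the context (one Space Saving instance with $1/\epsilon$ counters per depth, followed by the one-dimensional output procedure with threshold $\phi$). Then the algorithm stores $H\cdot(1/\epsilon)$ counters, i.e. uses $O(H/\epsilon)$ space, and its output set $P$ together with the reported values $f_{\min}(p),f_{\max}(p)$ for $p\in P$ satisfies the Accuracy and Coverage requirements: (Accuracy) for all $p\in P$, $f_{\min}(p)\le f(p)\le f_{\max}(p)$ and $f_{\max}(p)-f_{\min}(p)\le\epsilon N$; (Coverage) for every prefix $p\notin P$, $F_p<\phi N$, where $F_p$ is the conditioned count of $p$ with respect to $P$.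
   Context: Hierarchy: a rooted tree $T$ in which every leaf has depth $h$; nodes are prefixes, leaves are fully specified elements. For prefixes $e,p$, $e\preceq p$ means $p$ is an ancestor of $e$ or equal to $e$; $e\prec p$ means $e\preceq p$, $e\ne p$. The lattice node (label) of a prefix is its depth. Each non-root prefix $p$ has a parent $\mathrm{par}(p)$. Stream: a sequence of updates $(e,c)$ with $e$ fully specified and $c$ a positive integer. $f(e)$ is the sum of the $c$'s of updates with element $e$; $N=\sum_e f(e)$. The unconditioned count of a prefix $p$ is $f(p)=\sum_{e \text{ fully specified},\,e\preceq p} f(e)$. For a set $P$ of prefixes and a prefix $p$, with $P_p=\{q\in P:q\prec p\}$, the conditioned count is $F_p=\sum f(e)$ over fully specified $e$ with $e\preceq p$ and $e\not\preceq q$ for all $q\in P_p$. Space Saving with $m$ counters: maintains a set $T'$ of at most $m$ items, each with a counter $c(i)$ and an error value $\mathrm{err}(i)$. On input $(i,c)$: if $i\in T'$, set $c(i)\mathrel{+}=c$; else if $|T'|<m$, add $i$ with $c(i)=c$, $\mathrm{err}(i)=0$; else remove an item $j$ with the smallest counter and add $i$ with $c(i)=c(j)+c$, $\mathrm{err}(i)=c(j)$. Estimates for item $i$: if $i\in T'$, $f_{\max}(i)=c(i)$ and $f_{\min}(i)=c(i)-\mathrm{err}(i)$; otherwise $f_{\min}(i)=0$ and $f_{\max}(i)$ equals the smallest counter if $|T'|=m$, and $0$ otherwise. Algorithm: keep one Space Saving instance with $1/\epsilon$ counters for each depth $0,\dots,h$. On update $(e,c)$, for every prefix $p$ with $e\preceq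 p$, feed $(p,c)$ to the instance for the depth of $p$. For a prefix $p$, $f_{\min}(p),f_{\max}(p)$ denote the estimates of the instance for $p$'s depth. Output procedure with threshold $\phi$: set $s_e=0$ for all prefixes; process all prefixes in postorder (each prefix after all its descendants); for prefix $e$: if $f_{\max}(e)-s_e\ge\phi N$, output $e$ (put it in $P$) together with $f_{\min}(e),f_{\max}(e)$, and (if $e$ is not the root) add $f_{\min}(e)$ to $s_{\mathrm{par}(e)}$; otherwise (if $e$ is not the root) add $s_e$ to $s_{\mathrm{par}(e)}$. *)

From HB Require Import structures.
From mathcomp Require Import all_boot all_order all_algebra.
Set Implicit Arguments. Unset Strict Implicit. Unset Printing Implicit Defensive.
Import Order.TTheory GRing.Theory Num.Theory.

Section Hierarchy.
Variables (V : finType) (root : V) (par : V -> V).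

(* e ⪯ p : p is e or an ancestor of e (at most #|V|-1 parent steps suffice in a tree) *)
Definition anc (e p : V) : bool := [exists k : 'I_#|V|, iter k par e == p].
Definition sanc (e p : V) : bool := anc e p && (e != p).

Definition depth (v : V) : nat := index root (traject par v #|V|).

Definition leaf (v : V) : bool := [forall c : V, ~~ ((c != root) && (par c == v))].

Definition hierarchy (h : nat) : Prop :=
  [/\ par root = root,
      (forall v : V, exists k, iter k par v = root) &
      (forall v : V, leaf v -> depth v = h)].

Definition fcount (s : seq (V * nat)) (e : V) : nat := \sum_(u <- s | u.1 == e) u.2.
Definition Ntot (s : seq (V * nat)) : nat := \sum_(u <- s) u.2.
Definition fpref (s : seq (V * nat)) (p : V) : nat :=
  \sum_(e : V | leaf e && anc e p) fcount s e.
Definition Fcond (s : seq (V * nat)) (P : seq V) (p : V) : nat :=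
  \sum_(e : V | [&& leaf e, anc e p & all (fun q => ~~ (sanc q p && anc e q)) P])
     fcount s e.

Definition ss_state := seq (V * nat * nat).
Definition itm (t : V * nat * nat) : V := t.1.1.
Definition cnt (t : V * nat * nat) : nat := t.1.2.
Definition err (t : V * nat * nat) : nat := t.2.

Inductive ss_step (m : nat) (st : ss_state) (i : V) (c : nat) : ss_state -> Prop :=
| SS_in : i \in map itm st ->
    ss_step m st i c
      (map (fun t => if itm t == i then (itm t, cnt t + c, err t) else t) st)
| SS_add : i \notin map itm st -> size st < m ->
    ss_step m st i c (rcons st (i, c, 0))
| SS_replace : forall j, i \notin map itm st -> ~~ (size st < m) ->
    j \in st -> (forall t, t \in st -> cnt j <= cnt t) ->
    ss_step m st i c (rcons (rem j st) (i, cnt j + c, cnt j)).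

(* all possible states after processing the stream (any tie-breaking) *)
Inductive ss_run (m : nat) : seq (V * nat) -> ss_state -> Prop :=
| SS_nil : ss_run m [::] [::]
| SS_cons : forall s st i c st', ss_run m s st -> ss_step m st i c st' ->
    ss_run m (rcons s (i, c)) st'.

Definition mincnt (st : ss_state) : nat :=
  match st with
  | [::] => 0
  | t :: st' => foldr (fun u a => minn (cnt u) a) (cnt t) st'
  end.

Definition lookup (st : ss_state) (i : V) : V * nat * nat :=
  nth (i, 0, 0) st (index i (map itm st)).

Definition ss_fmax (m : nat) (st : ss_state) (i : V) : nat :=
  if i \in map itm st then cnt (lookup st i)
  else if size st == m then mincnt st else 0.

Definition ss_fmin (st : ss_state) (i : V) : nat :=
  if i \in map itm st then cnt (lookup st i) - err (lookup st i) else 0.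

Definition feed (d : nat) (s : seq (V * nat)) : seq (V * nat) :=
  flatten [seq [seq (p, u.2) | p <- enum V & anc u.1 p && (depth p == d)] | u <- s].

Definition postorder (ord : seq V) : Prop :=
  perm_eq ord (enum V) /\
  (forall e p : V, sanc e p -> index e ord < index p ord).

Variable R : realFieldType.
Local Open Scope ring_scope.

Definition out_step (phi : R) (N : nat) (fmin fmax : V -> nat)
    (acc : (V -> nat) * seq V) (e : V) : (V -> nat) * seq V :=
  let (sv, P) := acc in
  if phi * N%:R <= (fmax e)%:R - (sv e)%:R then
    ((fun x => if (e != root) && (x == par e) then sv x + fmin e else sv x), e :: P)
  else
    ((fun x => if (e != root) && (x == par e) then sv x + sv e else sv x), P).

Definition output (phi : R) (N : nat) (fmin fmax : V -> nat) (ord : seq V) : seq V :=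
  (foldl (out_step phi N fmin fmax) ((fun _ => 0%N), [::]) ord).2.

End Hierarchy.

From Pilot Require Import Defs.
From HB Require Import structures.
From mathcomp Require Import all_boot all_order all_algebra.
From mathcomp Require Import zify.
Import Order.TTheory GRing.Theory Num.Theory.
Set Implicit Arguments. Unset Strict Implicit. Unset Printing Implicit Defensive.

(* Each Space Saving instance keeps the classical invariant: a monitored item's counter
   exceeds its frequency by at most its error, every error is at most N/m (an evicted
   counter is a minimum, hence at most the average counter), and an unmonitored item's
   frequency is below every counter. As each leaf update is fed to exactly one prefix of
   every depth, the instance of depth d sees exactly the counts f(p) of the prefixes of
   depth d, which gives accuracy. For coverage, when the output procedure reaches p, the
   value s_p is at most the count of the leaves lying below a child of p and below an
   already output prefix; such leaves are excluded from F_p, so F_p + s_p <= f(p) <=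
   f_max(p), while p not being output means f_max(p) - s_p < phi N. *)

Lemma fcount_rcons (V : finType) (s : seq (V * nat)) i c j :
  fcount (rcons s (i, c)) j = fcount s j + (if i == j then c else 0).
Proof. by rewrite /fcount -cats1 big_cat big_cons big_nil /=; case: eqP; rewrite ?addn0. Qed.

Lemma Ntot_rcons (V : finType) (s : seq (V * nat)) i c : Ntot (rcons s (i, c)) = Ntot s + c.
Proof. by rewrite /Ntot -cats1 big_cat big_seq1. Qed.

Arguments itm V !t /.
Arguments cnt V !t /.
Arguments err V !t /.

Section SpaceSaving.
Variables (V : finType) (m : nat).
Hypothesis m_gt0 : 0 < m.

Local Notation itm := (@itm V).
Local Notation cnt := (@cnt V).
Local Notation err := (@err V).

Record ss_inv (str : seq (V * nat)) (st : ss_state V) : Prop := SSInv {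
  ss_uniq : uniq (map itm st);
  ss_size : size st <= m;
  ss_cnt : forall t, t \in st -> fcount str (itm t) <= cnt t <= fcount str (itm t) + err t;
  ss_err : forall t, t \in st -> err t * m <= Ntot str;
  ss_unmonitored : forall j t, j \notin map itm st -> t \in st -> fcount str j <= cnt t;
  ss_unmonitored_notfull : forall j, j \notin map itm st -> size st < m -> fcount str j = 0;
  ss_sum_cnt : \sum_(t <- st) cnt t <= Ntot str }.

Lemma sum_cnt_ge (st : ss_state V) a :
  (forall t, t \in st -> a <= cnt t) -> a * size st <= \sum_(t <- st) cnt t.
Proof.
move=> le_a; rewrite -iter_addn_0 -count_predT -big_const_seq big_seq_cond [leqRHS]big_seq_cond.
by apply: leq_sum => t /andP [/le_a].
Qed.

Lemma ss_inv_nil : ss_inv [::] [::].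
Proof. by split; rewrite ?big_nil // => j _ _; rewrite /fcount big_nil. Qed.

Lemma ss_inv_incr str st i c : ss_inv str st -> i \in map itm st ->
  ss_inv (rcons str (i, c))
    (map (fun t => if itm t == i then (itm t, cnt t + c, err t) else t) st).
Proof.
case=> uniq_st size_st cnt_st err_st unmon unmon_nf sum_st i_in.
set g := fun t => if itm t == i then (itm t, cnt t + c, err t) else t.
have itm_g : map itm (map g st) = map itm st.
  by rewrite -map_comp; apply: eq_map => t /=; rewrite /g; case: ifP.
split; rewrite ?itm_g ?size_map ?Ntot_rcons //.
- move=> _ /mapP [t t_in ->]; rewrite /g fcount_rcons.
  case: eqVneq => [<-|t_neq] /=; last by rewrite eq_sym (negbTE t_neq) addn0 cnt_st.
  by rewrite eqxx leq_add2r -addnAC leq_add2r cnt_st.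
- move=> _ /mapP [t t_in ->]; apply: leq_trans (leq_addr c _).
  by rewrite /g; case: ifP => _ /=; rewrite err_st.
- move=> j _ j_out /mapP [t t_in ->].
  have i_neq : (i == j) = false by apply: contraNF j_out => /eqP <-.
  rewrite fcount_rcons i_neq addn0 (leq_trans (unmon _ _ j_out t_in)) /g //.
  by case: ifP => //= _; rewrite leq_addr.
- move=> j j_out; have i_neq : (i == j) = false by apply: contraNF j_out => /eqP <-.
  by rewrite fcount_rcons i_neq addn0 => /unmon_nf ->.
- have one_i : count (pred1 i) (map itm st) = 1 by rewrite (count_uniq_mem i uniq_st) i_in.
  rewrite big_map (eq_bigr (fun t => cnt t + (if itm t == i then c else 0))); last first.
    by move=> t _; rewrite /g; case: ifP; rewrite ?addn0.
  rewrite big_split -big_mkcond big_const_seq iter_addn_0 /= leq_add //.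
  by rewrite -(count_map itm (pred1 i)) one_i muln1.
Qed.

Lemma ss_inv_insert str st i c : ss_inv str st -> i \notin map itm st -> size st < m ->
  ss_inv (rcons str (i, c)) (rcons st (i, c, 0)).
Proof.
case=> uniq_st size_st cnt_st err_st unmon unmon_nf sum_st i_out lt_size.
have neq_i t : t \in st -> (i == itm t) = false.
  by move=> t_in; apply: contraNF i_out => /eqP ->; apply: map_f.
have absent_new j : j \notin rcons (map itm st) i -> fcount (rcons str (i, c)) j = 0.
  rewrite mem_rcons in_cons negb_or => /andP [j_neq j_out].
  by rewrite fcount_rcons eq_sym (negbTE j_neq) addn0 (unmon_nf _ j_out lt_size).
split; rewrite ?map_rcons /= ?rcons_uniq ?i_out ?size_rcons ?Ntot_rcons //.
- move=> t; rewrite mem_rcons in_cons => /orP [/eqP -> /=|t_in].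
    by rewrite fcount_rcons eqxx (unmon_nf _ i_out lt_size) add0n addn0 leqnn.
  by rewrite fcount_rcons (neq_i _ t_in) addn0 cnt_st.
- move=> t; rewrite mem_rcons in_cons => /orP [/eqP -> //|t_in].
  by rewrite (leq_trans (err_st _ t_in)) ?leq_addr.
- by move=> j t /absent_new ->.
- by move=> j /absent_new.
- by rewrite -cats1 big_cat big_seq1 leq_add2r.
Qed.

Lemma ss_inv_replace str st i c j : ss_inv str st -> i \notin map itm st -> size st = m ->
  j \in st -> (forall t, t \in st -> cnt j <= cnt t) ->
  ss_inv (rcons str (i, c)) (rcons (rem j st) (i, cnt j + c, cnt j)).
Proof.
case=> uniq_st size_st cnt_st err_st unmon unmon_nf sum_st i_out full j_in j_min.
have perm_j := perm_to_rem j_in.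
have perm_itm := perm_map itm perm_j.
have uniq_rem : uniq (itm j :: map itm (rem j st)) by rewrite -(perm_uniq perm_itm).
have i_out_rem : i \notin map itm (rem j st).
  by apply: contra i_out => i_in; rewrite (perm_mem perm_itm) in_cons i_in orbT.
have size_rem : size (rem j st) = m.-1 by rewrite size_rem // full.
have neq_i t : t \in rem j st -> (i == itm t) = false.
  by move=> t_in; apply: contraNF i_out_rem => /eqP ->; apply: map_f.
have fi_le : fcount str i <= cnt j := unmon _ _ i_out j_in.
split; rewrite ?map_rcons /= ?rcons_uniq ?i_out_rem ?size_rcons ?size_rem ?prednK ?Ntot_rcons //.
- by case/andP: uniq_rem.
- move=> t; rewrite mem_rcons in_cons => /orP [/eqP -> /=|t_in].
    rewrite fcount_rcons eqxx leq_add2r fi_le; lia.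
  by rewrite fcount_rcons (neq_i _ t_in) addn0 cnt_st // (mem_rem t_in).
- move=> t; rewrite mem_rcons in_cons => /orP [/eqP -> /=|t_in].
    by rewrite -full (leq_trans (sum_cnt_ge j_min)) ?(leq_trans sum_st) ?leq_addr.
  by rewrite (leq_trans (err_st _ (mem_rem t_in))) ?leq_addr.
- move=> k t; rewrite mem_rcons in_cons negb_or => /andP [k_neq k_out].
  rewrite fcount_rcons eq_sym (negbTE k_neq) addn0.
  have fk_le : fcount str k <= cnt j.
    case: (boolP (k \in map itm st)) => [|/unmon -> //].
    rewrite (perm_mem perm_itm) in_cons (negbTE k_out) orbF => /eqP ->.
    by case/andP: (cnt_st _ j_in).
  rewrite mem_rcons in_cons => /orP [/eqP -> /=|/mem_rem t_in].
    exact: leq_trans fk_le (leq_addr _ _).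
  exact: leq_trans fk_le (j_min _ t_in).
- by rewrite ltnn.
- move: sum_st; rewrite (perm_big _ perm_j) big_cons -cats1 big_cat big_seq1 /=; lia.
Qed.

Lemma ss_inv_step str st i c st' :
  ss_inv str st -> ss_step m st i c st' -> ss_inv (rcons str (i, c)) st'.
Proof.
move=> inv; case=> [||j i_out not_lt].
- exact: ss_inv_incr.
- exact: ss_inv_insert.
by apply: ss_inv_replace => //; apply/eqP; rewrite eqn_leq (ss_size inv) leqNgt.
Qed.

Lemma ss_inv_run str st : ss_run m str st -> ss_inv str st.
Proof.
elim=> [|str0 st0 i c st1 _ inv step]; first exact: ss_inv_nil.
exact: ss_inv_step inv step.
Qed.

Lemma lookup_mem (st : ss_state V) i : i \in map itm st -> lookup st i \in st.
Proof. by move=> i_in; rewrite /lookup mem_nth // -(size_map itm) index_mem. Qed.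

Lemma itm_lookup (st : ss_state V) i : i \in map itm st -> itm (lookup st i) = i.
Proof.
move=> i_in; have lt_i : index i (map itm st) < size st by rewrite -(size_map itm) index_mem.
by rewrite /lookup -(nth_map (i, 0, 0) i) // nth_index.
Qed.

Lemma mincnt_leq (st : ss_state V) t : t \in st -> mincnt st <= cnt t.
Proof.
case: st => // t0 st /=; elim: st => [|u st IH] in t *; first by rewrite mem_seq1 => /eqP ->.
rewrite /= !in_cons => /or3P [/eqP ->|/eqP ->|t_in]; rewrite geq_min ?leqnn ?orbT //.
- by rewrite IH ?mem_head ?orbT.
- by rewrite IH ?in_cons ?t_in ?orbT.
Qed.

Lemma mincnt_geq (st : ss_state V) a :
  st != [::] -> (forall t, t \in st -> a <= cnt t) -> a <= mincnt st.
Proof.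
case: st => // t0 st _ /=; elim: st => [|u st IH] le_a /=; first by rewrite le_a ?mem_head.
rewrite leq_min le_a ?in_cons ?eqxx ?orbT //=.
apply: IH => t; rewrite in_cons => /orP [/eqP ->|t_in];
  by rewrite le_a // !in_cons ?eqxx ?t_in ?orbT.
Qed.

Section Estimates.
Variables (str : seq (V * nat)) (st : ss_state V).
Hypothesis inv : ss_inv str st.

Lemma ss_fmin_leq i : ss_fmin st i <= fcount str i.
Proof.
rewrite /ss_fmin; case: ifP => // i_in.
by have /andP [_] := ss_cnt inv (lookup_mem i_in); rewrite itm_lookup // leq_subLR addnC.
Qed.

Lemma ss_fmax_geq i : fcount str i <= ss_fmax m st i.
Proof.
rewrite /ss_fmax; case: ifP => [i_in|/negbT i_out].
  by have /andP [] := ss_cnt inv (lookup_mem i_in); rewrite itm_lookup.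
case: (size st =P m) => [full|not_full]; last first.
  by rewrite (ss_unmonitored_notfull inv i_out) // ltn_neqAle (ss_size inv) andbT; apply/eqP.
apply: mincnt_geq => [|t]; last exact: ss_unmonitored inv _ _ i_out.
by apply: contraTneq m_gt0 => st0; rewrite -full st0.
Qed.

Lemma ss_fmax_sub_fmin i : (ss_fmax m st i - ss_fmin st i) * m <= Ntot str.
Proof.
rewrite /ss_fmax /ss_fmin; case: ifP => [i_in|_].
  have t_in := lookup_mem i_in.
  by rewrite (leq_trans _ (ss_err inv t_in)) // leq_mul2r -minnE geq_minr orbT.
case: (size st =P m) => [full|_]; last by rewrite sub0n.
rewrite subn0 -full (leq_trans _ (ss_sum_cnt inv)) // sum_cnt_ge //.
exact: mincnt_leq.
Qed.

End Estimates.

End SpaceSaving.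

Lemma leq_sum_pred (T : finType) (P Q : pred T) (F : T -> nat) :
  (forall i, P i -> Q i) -> \sum_(i | P i) F i <= \sum_(i | Q i) F i.
Proof. by move=> PQ; apply: sub_le_big => // x y; rewrite leq_addr. Qed.

Lemma sum_cond_eq (T : finType) (P : pred T) x c :
  \sum_(y | P y && (y == x)) c = if P x then c else 0.
Proof.
case: ifP => [Px|nPx]; [rewrite (big_pred1 x) | rewrite big_pred0] => // y /=;
  by case: (y =P x) => [->|_]; rewrite ?andbT ?andbF.
Qed.

Section Hierarchy.
Variables (V : finType) (root : V) (par : V -> V).
Hypotheses (par_root : par root = root) (root_reachable : forall v, exists k, iter k par v = root).

Local Notation depth := (depth root par).
Local Notation anc := (anc par).
Local Notation feed := (feed root par).

Lemma root_in_traject v : root \in traject par v #|V|.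
Proof.
have [k Hk] := root_reachable v.
have reach : fconnect par v root by rewrite -Hk fconnect_iter.
apply/trajectP; exists (findex par v root); last by rewrite iter_findex.
exact: leq_trans (findex_max reach) (max_card _).
Qed.

Lemma depth_lt_card v : depth v < #|V|.
Proof. by rewrite /Defs.depth -[X in (_ < X)%N](size_traject par v) index_mem root_in_traject. Qed.

Lemma iter_depth v : iter (depth v) par v = root.
Proof.
rewrite -{2}(nth_index root (root_in_traject v)) -/(depth v).
by rewrite (set_nth_default v) ?size_traject ?depth_lt_card // nth_traject ?depth_lt_card.
Qed.

Lemma iter_neq_root v k : k < depth v -> iter k par v != root.
Proof.
move=> lt_k; have lt_kV : k < #|V| := ltn_trans lt_k (depth_lt_card v).
by have := before_find v lt_k; rewrite nth_traject //= => ->.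
Qed.

Lemma depth_eq v d :
  iter d par v = root -> (forall k, k < d -> iter k par v != root) -> depth v = d.
Proof.
move=> reach_d before_d.
case: (ltngtP (depth v) d) => // [/before_d|/iter_neq_root].
  by rewrite iter_depth eqxx.
by rewrite reach_d eqxx.
Qed.

Lemma iter_par_root n : iter n par root = root.
Proof. by elim: n => //= n ->. Qed.

Lemma depth_iter v j : j <= depth v -> depth (iter j par v) = depth v - j.
Proof.
move=> le_j; apply: depth_eq => [|k lt_k]; rewrite -iterD.
  by rewrite subnK // iter_depth.
by apply: iter_neq_root; lia.
Qed.

Lemma iter_minn_depth v i : iter i par v = iter (minn i (depth v)) par v.
Proof.
case: leqP => // /ltnW le_d.
by rewrite -(subnK le_d) iterD iter_depth iter_par_root.
Qed.

Lemma ancP e p : reflect (exists i, iter i par e = p) (anc e p).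
Proof.
apply: (iffP existsP) => [[k /eqP]|[i]]; first by exists k.
rewrite iter_minn_depth => <-.
have lt_i : minn i (depth e) < #|V| := leq_ltn_trans (geq_minr _ _) (depth_lt_card e).
by exists (Ordinal lt_i).
Qed.

Lemma anc_iter e p : anc e p -> exists2 i, i <= depth e & iter i par e = p.
Proof.
case/ancP=> i <-; exists (minn i (depth e)); first exact: geq_minr.
by rewrite -iter_minn_depth.
Qed.

Lemma anc_refl e : anc e e.
Proof. by apply/ancP; exists 0. Qed.

Lemma anc_par e : anc e (par e).
Proof. by apply/ancP; exists 1. Qed.

Lemma anc_trans a b c : anc a b -> anc b c -> anc a c.
Proof. by case/ancP=> i <- /ancP [j <-]; apply/ancP; exists (j + i); rewrite iterD. Qed.

Lemma anc_total e a b : anc e a -> anc e b -> anc a b || anc b a.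
Proof.
case/ancP=> i <- /ancP [j <-]; case: (leqP i j) => [le_ij|/ltnW le_ji].
  by apply/orP; left; apply/ancP; exists (j - i); rewrite -iterD subnK.
by apply/orP; right; apply/ancP; exists (i - j); rewrite -iterD subnK.
Qed.

Lemma anc_depth e p : anc e p -> depth p <= depth e.
Proof. by case/anc_iter=> i le_i <-; rewrite depth_iter // leq_subr. Qed.

Lemma anc_depth_eq e p : anc e p -> depth p = depth e -> p = e.
Proof.
case/anc_iter=> i le_i <-; rewrite depth_iter // => eq_d.
by have -> : i = 0 by lia.
Qed.

Lemma anc_same_depth e a b : anc e a -> anc e b -> depth a = depth b -> a = b.
Proof.
move=> ea eb eq_d; case/orP: (anc_total ea eb) => [ab|ba].
  exact/esym/(anc_depth_eq ab).
exact: anc_depth_eq ba _.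
Qed.

Lemma anc_antisym a b : anc a b -> anc b a -> a = b.
Proof.
move=> ab ba; apply/esym/(anc_depth_eq ab).
by apply/eqP; rewrite eqn_leq !anc_depth.
Qed.

Lemma depth_par c : c != root -> depth c = (depth (par c)).+1.
Proof.
move=> c_neq; have d_gt0 : 0 < depth c.
  by rewrite lt0n; apply: contra c_neq => /eqP d0; rewrite -[c]/(iter 0 par c) -d0 iter_depth.
by rewrite -[par c]/(iter 1 par c) depth_iter // subn1 prednK.
Qed.

Lemma par_neq c : c != root -> par c != c.
Proof. by move=> /depth_par d_c; apply/eqP => par_c; rewrite par_c in d_c; lia. Qed.

Lemma depth_leq_height h : (forall v, leaf root par v -> depth v = h) -> forall v, depth v <= h.
Proof.
move=> leaf_h v.
case: (@arg_maxnP _ v (anc^~ v) depth (anc_refl v)) => w wv w_max.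
have leaf_w : leaf root par w.
  apply/forallP => c; apply/negP => /andP [c_neq /eqP par_c].
  have := w_max c (anc_trans (anc_par c) (etrans (congr1 (anc^~ v) par_c) wv)).
  by rewrite (depth_par c_neq) par_c; lia.
by rewrite -(leaf_h w leaf_w) anc_depth.
Qed.

Lemma fcount_feed (s : seq (V * nat)) p :
  fcount (feed (depth p) s) p = \sum_(u <- s | anc u.1 p) u.2.
Proof.
rewrite /fcount big_flatten big_map [RHS]big_mkcond /=; apply: eq_bigr => u _.
rewrite big_map big_filter_cond big_enum_cond /= -sum_cond_eq.
by apply: eq_bigl => q; case: (q =P p) => [->|_]; rewrite ?eqxx ?andbT ?andbF.
Qed.

Lemma fpref_stream (s : seq (V * nat)) p : all (leaf root par \o fst) s ->
  fpref root par s p = \sum_(u <- s | anc u.1 p) u.2.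
Proof.
move=> /allP leaf_s; rewrite /fpref /fcount (exchange_big_dep predT) //=.
rewrite [RHS]big_mkcond big_seq [RHS]big_seq; apply: eq_bigr => u u_in.
rewrite (eq_bigl (fun e => leaf root par e && anc e p && (e == u.1))) => [|e].
  by rewrite sum_cond_eq (leaf_s _ u_in : leaf root par u.1).
by rewrite [u.1 == e]eq_sym.
Qed.

Lemma Ntot_feed d (s : seq (V * nat)) : Ntot (feed d s) <= Ntot s.
Proof.
rewrite /Ntot big_flatten big_map; apply: leq_sum => u _.
rewrite big_map big_filter big_enum_cond /= sum_nat_const -[leqRHS]mul1n leq_mul //.
apply/card_le1_eqP => a b /andP [ua /eqP da] /andP [ub /eqP db].
by apply: (anc_same_depth ub ua); rewrite da db.
Qed.

(* [l] is the list of prefixes processed so far and [P] the output so far: leaf [e] is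
   covered at [x] when it lies below a processed child [c] of [x] and below an output
   prefix [q] with [q] an ancestor-or-self of [c]. *)
Definition covered (l P : seq V) (x e : V) : bool :=
  has (fun c => [&& c != root, par c == x, anc e c & has (fun q => anc e q && anc q c) P]) l.

Lemma covered_sub (l l' P P' : seq V) x e : {subset l <= l'} -> {subset P <= P'} ->
  covered l P x e -> covered l' P' x e.
Proof.
move=> sub_l sub_P /hasP [c c_in /and4P [c_neq par_c ec /hasP [q q_in qc]]].
by apply/hasP; exists c; rewrite ?sub_l // c_neq par_c ec; apply/hasP; exists q; rewrite ?sub_P.
Qed.

Lemma covered_not_anc (l P : seq V) e0 e : e0 \notin l -> e0 != root ->
  covered l P (par e0) e -> ~~ anc e e0.
Proof.
move=> e0_out e0_neq /hasP [c c_in /and4P [c_neq /eqP par_c ec _]]; apply/negP => ee0.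
have eq_d : depth c = depth e0 by rewrite (depth_par c_neq) (depth_par e0_neq) par_c.
by move: e0_out; rewrite -(anc_same_depth ec ee0 eq_d) c_in.
Qed.

Lemma covered_sum_add (F : V -> nat) (l P l' P' : seq V) e0 b a (Q : pred V) :
  e0 \notin l -> e0 != root -> {subset l <= l'} -> {subset P <= P'} ->
  b <= \sum_(e | leaf root par e && covered l P (par e0) e) F e ->
  a <= \sum_(e | leaf root par e && Q e) F e ->
  (forall e, leaf root par e -> Q e -> anc e e0 && covered l' P' (par e0) e) ->
  b + a <= \sum_(e | leaf root par e && covered l' P' (par e0) e) F e.
Proof.
move=> e0_out e0_neq sub_l sub_P le_b le_a Q_sub.
rewrite (bigID (anc^~ e0)) /= addnC leq_add //.
  apply: leq_trans le_a (leq_sum_pred _ _) => e /andP [leaf_e Qe].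
  by have /andP [-> ->] := Q_sub e leaf_e Qe; rewrite leaf_e.
apply: leq_trans le_b (leq_sum_pred _ _) => e /andP [leaf_e cov_e].
by rewrite leaf_e (covered_sub sub_l sub_P cov_e) (covered_not_anc e0_out e0_neq cov_e).
Qed.

Lemma Fcond_add_covered (s : seq (V * nat)) (l P P' : seq V) p : {subset P <= P'} ->
  Fcond root par s P' p + \sum_(e | leaf root par e && covered l P p e) fcount s e
    <= fpref root par s p.
Proof.
move=> sub_P; rewrite /fpref.
rewrite [leqRHS](bigID (fun e => all (fun q => ~~ (sanc par q p && anc e q)) P')) /=.
apply: leq_add; first by apply: leq_sum_pred => e /and3P [-> -> ->].
apply: leq_sum_pred => e /andP [leaf_e /hasP [c c_in /and4P [c_neq /eqP par_c ec /hasP [q q_in]]]].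
case/andP=> eq' qc; have cp : anc c p by rewrite -par_c anc_par.
rewrite leaf_e (anc_trans ec cp) /=; apply/allPn; exists q; first exact: sub_P.
rewrite /sanc (anc_trans qc cp) eq' andbT negbK; apply: contra_neq (par_neq c_neq) => qp.
by rewrite par_c; apply: anc_antisym cp; rewrite -qp.
Qed.

Section Output.
Variables (R : realFieldType) (phi : R) (N : nat) (fmin fmax : V -> nat) (s : seq (V * nat)).

Local Notation out_step := (out_step root par phi N fmin fmax).

Lemma output_mono (l : seq V) acc : {subset acc.2 <= (foldl out_step acc l).2}.
Proof.
elim: l acc => [|x l IH] [sv P] //= y y_in; apply: IH.
by rewrite /out_step; case: ifP => _ //=; rewrite in_cons y_in orbT.
Qed.

Hypothesis fmin_leq : forall e, fmin e <= fpref root par s e.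

Lemma output_acc_covered (l : seq V) : uniq l ->
  let acc := foldl out_step ((fun _ => 0), [::]) l in
  forall x, acc.1 x <= \sum_(e | leaf root par e && covered l acc.2 x e) fcount s e.
Proof.
elim/last_ind: l => [//|l e0 IH].
rewrite rcons_uniq => /andP [e0_out /IH] /=; rewrite foldl_rcons.
case: (foldl _ _ l) => sv P /= cov_sv.
have sub_l : {subset l <= rcons l e0} by move=> y y_in; rewrite mem_rcons in_cons y_in orbT.
have cov_mono P' : {subset P <= P'} -> forall x,
    sv x <= \sum_(e | leaf root par e && covered (rcons l e0) P' x e) fcount s e.
  move=> sub_P x; apply: leq_trans (cov_sv x) (leq_sum_pred _ _) => e /andP [-> /=].
  exact: covered_sub.
rewrite /out_step; case: ifP => _ x /=.
- have sub_P : {subset P <= e0 :: P} by move=> y y_in; rewrite in_cons y_in orbT.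
  case: (boolP ((e0 != root) && (x == par e0))) => [/andP [e0_neq /eqP ->]|_]; last exact: cov_mono.
  apply: (covered_sum_add (Q := anc^~ e0) e0_out e0_neq sub_l sub_P (cov_sv _) (fmin_leq e0)).
  move=> e _ ee0; rewrite ee0 /covered; apply/hasP; exists e0; first by rewrite mem_rcons mem_head.
  by rewrite e0_neq eqxx ee0 /= ee0 anc_refl.
- case: (boolP ((e0 != root) && (x == par e0))) => [/andP [e0_neq /eqP ->]|_]; last exact: cov_mono.
  apply: (covered_sum_add (Q := covered l P e0) e0_out e0_neq sub_l (fun _ => id)
    (cov_sv _) (cov_sv _)).
  move=> e _ /hasP [c c_in /and4P [c_neq /eqP par_c ec /hasP [q q_in /andP [eq' qc]]]].
  have ce0 : anc c e0 by rewrite -par_c anc_par.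
  have ee0 := anc_trans ec ce0.
  rewrite ee0 /covered; apply/hasP; exists e0; first by rewrite mem_rcons mem_head.
  by rewrite e0_neq eqxx ee0 /=; apply/hasP; exists q; rewrite // eq' (anc_trans qc ce0).
Qed.

Lemma output_coverage (ord : seq V) p : uniq ord -> p \in ord ->
  (forall e, fpref root par s e <= fmax e) ->
  p \notin output root par phi N fmin fmax ord ->
  ((Fcond root par s (output root par phi N fmin fmax ord) p)%:R < phi * N%:R)%R.
Proof.
move=> uniq_ord p_in fmax_geq; case/splitPr: p_in uniq_ord => l1 l2.
rewrite cat_uniq => /andP [uniq_l1 _]; rewrite /output foldl_cat /=.
have := output_acc_covered uniq_l1; case: (foldl _ _ l1) => sv P1 /= cov_sv.
set Pf := (foldl _ _ l2).2; have mono := output_mono l2 (acc := out_step (sv, P1) p).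
rewrite -/Pf in mono *; rewrite /out_step in mono; case: ifP mono => [_ mono|not_out mono _].
  by rewrite mono ?mem_head.
have le_fmax : Fcond root par s Pf p + sv p <= fmax p.
  apply: leq_trans (fmax_geq p); apply: leq_trans (Fcond_add_covered s l1 p mono).
  exact: leq_add (leqnn _) (cov_sv p).
move/negbT: not_out; rewrite -ltNge => /(le_lt_trans _); apply.
by rewrite lerBrDr -natrD ler_nat.
Qed.
End Output.
End Hierarchy.

Local Open Scope ring_scope.

Theorem theorem1 (R : realFieldType) (V : finType) (root : V) (par : V -> V)
    (h : nat) (phi : R) (k : nat) (s : seq (V * nat))
    (sts : nat -> seq (V * nat * nat)) (ord : seq V) :
  hierarchy root par h ->
  0 < phi <= 1 ->
  (0 < k)%N ->
  all (fun u => leaf root par u.1 && (0 < u.2)%N) s ->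
  (forall d, (d <= h)%N -> ss_run k (feed root par d s) (sts d)) ->
  postorder par ord ->
  let eps : R := k%:R^-1 in
  let N := Ntot s in
  let fmin p := ss_fmin (sts (depth root par p)) p in
  let fmax p := ss_fmax k (sts (depth root par p)) p in
  let P := output root par phi N fmin fmax ord in
  (\sum_(d < h.+1) size (sts d) <= h.+1 * k)%N /\
  (forall p, p \in P ->
     [/\ (fmin p <= fpref root par s p)%N, (fpref root par s p <= fmax p)%N
       & (fmax p)%:R - (fmin p)%:R <= eps * N%:R :> R]) /\
  (forall p, p \notin P -> (Fcond root par s P p)%:R < phi * N%:R).
(* Coverage holds for any processing order, so only the fact that [ord] enumerates
   every prefix once is used. *)
Proof.
case=> par_root root_reachable leaf_h _ k_gt0 stream_ok runs [ord_perm _] eps N fmin fmax P.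
have leaf_s : all (leaf root par \o fst) s by apply: sub_all stream_ok => u /andP [].
have inv d : (d <= h)%N -> ss_inv k (feed root par d s) (sts d) by move/runs/(ss_inv_run k_gt0).
have inv_p p := inv _ (depth_leq_height par_root root_reachable leaf_h p).
have fcount_feed_p p : fcount (feed root par (depth root par p) s) p = fpref root par s p.
  by rewrite fcount_feed fpref_stream.
have fmin_leq p : (fmin p <= fpref root par s p)%N.
  by rewrite -fcount_feed_p (ss_fmin_leq (inv_p p)).
have fmax_geq p : (fpref root par s p <= fmax p)%N.
  by rewrite -fcount_feed_p (ss_fmax_geq k_gt0 (inv_p p)).
split; [|split].
- apply: (@leq_trans (\sum_(d < h.+1) k)); last by rewrite sum_nat_const card_ord.
  by apply: leq_sum => d _; apply: ss_size (inv d (ltn_ord d)).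
- move=> p _; split=> //; rewrite -natrB ?(leq_trans (fmin_leq p)) //.
  rewrite ler_pdivlMl ?ltr0n // -natrM ler_nat mulnC.
  apply: leq_trans (ss_fmax_sub_fmin (inv_p p) p) _.
  exact: Ntot_feed par_root root_reachable _ _.
- move=> p; apply: output_coverage => //; first by rewrite (perm_uniq ord_perm) enum_uniq.
  by rewrite (perm_mem ord_perm) mem_enum.
Qed.
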